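(* If $R\subseteq\mathbb{N}$ has large gaps, then $R$ is rich.
   Context: A set $R\subseteq\mathbb{N}$ has large gaps if $R$ is infinite, $0\notin R$, and for every $k\in\mathbb{N}$ with $k>0$ there exists $q\in R$ such that $[\lfloor q/k\rfloor,\,k\cdot q]\cap R=\{q\}$ (intervals of natural numbers). A set $R\subseteq\mathbb{N}$ is rich if for all $s,u,v\in\mathbb{N}$, all $\bar a_0\in\{0,1\}^s\setminus\{\bar0\}$, $\bar a_1,\dots,\bar a_u\in\mathbb{N}^s$ and all $c_1,\dots,c_u\in\mathbb{N}$ with $(\bar a_0,0)\ne(\bar a_i,c_i)$ for all $i\in\{1,\dots,u\}$, there exist $\bar x,\bar y\in(v+\mathbb{N})^s$ (vectors with all entries $\ge v$) such that $\bar a_0^\top\bar x\in R\iff\bar a_0^\top\bar y\notin R$, and $\bar a_i^\top\bar x-c_i\in R\iff\bar a_i^\top\bar y-c_i\in R$ for all $i\in\{1,\dots,u\}$. *)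

From mathcomp Require Import all_boot.
Set Implicit Arguments. Unset Strict Implicit. Unset Printing Implicit Defensive.

Definition dotn (s : nat) (a x : 'I_s -> nat) : nat := \sum_(j < s) a j * x j.

(* The integer (a^T x - c) belongs to R (as an integer; negative integers are
   never in R ⊆ N). *)
Definition inR_shift (R : nat -> Prop) (n c : nat) : Prop := c <= n /\ R (n - c).

Definition large_gaps (R : nat -> Prop) : Prop :=
  (forall N, exists q, N <= q /\ R q)
  /\ ~ R 0
  /\ forall k : nat, 0 < k ->
       exists q, R q /\ forall n, q %/ k <= n -> n <= k * q -> R n -> n = q.

Definition rich (R : nat -> Prop) : Prop :=
  forall (s u v : nat) (a0 : 'I_s -> bool) (a : 'I_u -> 'I_s -> nat) (c : 'I_u -> nat),
    (exists j, a0 j = true) ->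
    (forall i, ~ ((forall j, a i j = nat_of_bool (a0 j)) /\ c i = 0)) ->
    exists x y : 'I_s -> nat,
      (forall j, v <= x j) /\ (forall j, v <= y j) /\
      (R (dotn (fun j => nat_of_bool (a0 j)) x) <-> ~ R (dotn (fun j => nat_of_bool (a0 j)) y)) /\
      (forall i, inR_shift R (dotn (a i) x) (c i) <-> inR_shift R (dotn (a i) y) (c i)).

From mathcomp Require Import all_boot.
From mathcomp Require Import zify.
Set Implicit Arguments.
Unset Strict Implicit.
Unset Printing Implicit Defensive.

(* Take q in R isolated by the factor k = 3K + 2, where K bounds the
   coefficients a_i, and large with respect to the data below.  With the base
   vector b_j = P^(j+1), P exceeding every coefficient, and d = 1 + max c_i, put
   x = b + (q - a0.b) e_j0 and y = x + d e_j0, so a0.x = q is in R while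
   a0.y = q + d lies in the gap around q.  A row with a_i,j0 = 0 takes the same
   value at x and y.  Otherwise a_i.z - c_i (z = x or y) lies in [q/k, kq], so it
   is in R only if it equals q; this forces a_i,j0 = 1, and comparing base-P
   digits then gives a_i = a0 and c_i = z_j0 - x_j0, i.e. (a_i, c_i) = (a0, 0)
   or c_i = d, both excluded. *)

Lemma edivn_uniq d q1 q2 r1 r2 :
  r1 < d -> r2 < d -> q1 * d + r1 = q2 * d + r2 -> q1 = q2 /\ r1 = r2.
Proof.
move=> lt_r1 lt_r2 eq12.
by have := edivn_eq q2 lt_r2; rewrite -eq12 edivn_eq // => -[-> ->].
Qed.

Lemma dotn_pow_recl P s (d : 'I_s.+1 -> nat) :
  dotn d (fun j => P ^ j) = d ord0 + P * dotn (fun j => d (lift ord0 j)) (fun j => P ^ j).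
Proof.
rewrite /dotn big_ord_recl expn0 muln1 big_distrr; congr (_ + _).
by apply: eq_bigr => j _; rewrite expnS mulnCA.
Qed.

Lemma base_digits_inj P s (d b : 'I_s -> nat) :
  (forall j, d j < P) -> (forall j, b j < P) ->
  dotn d (fun j => P ^ j) = dotn b (fun j => P ^ j) -> d =1 b.
Proof.
elim: s d b => [|s IHs] d b lt_d lt_b; first by move=> _ [].
rewrite !dotn_pow_recl ![_ + P * _]addnC ![P * _]mulnC => /edivn_uniq.
case=> // /IHs eq_tail eq_head j.
have {}eq_tail := eq_tail (fun j => lt_d _) (fun j => lt_b _).
by case: (unliftP ord0 j) => [j'|] ->.
Qed.

Lemma dotn_pow_succ P s (d : 'I_s -> nat) :
  dotn d (fun j => P ^ j.+1) = P * dotn d (fun j => P ^ j).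
Proof. by rewrite /dotn big_distrr; apply: eq_bigr => j _; rewrite expnS mulnCA. Qed.

Lemma dotn_addr_delta s (w b : 'I_s -> nat) j0 t :
  dotn w (fun j => b j + (if j == j0 then t else 0)) = dotn w b + w j0 * t.
Proof.
rewrite /dotn; under eq_bigr do rewrite mulnDr.
rewrite big_split /=; congr (_ + _).
rewrite (bigD1 j0) //= eqxx big1 ?addn0 // => j /negbTE ->.
by rewrite muln0.
Qed.

Definition isolated (R : nat -> Prop) (k q : nat) : Prop :=
  R q /\ forall n, q %/ k <= n -> n <= k * q -> R n -> n = q.

Lemma isolated_leq R k k' q : 0 < k -> k <= k' -> isolated R k' q -> isolated R k q.
Proof.
move=> k_gt0 le_kk' [Rq isoq]; split=> // n ge_n le_n; apply: isoq.
  exact: leq_trans (leq_div2l _ k_gt0 le_kk') ge_n.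
by apply: (leq_trans le_n); rewrite leq_mul2r le_kk' orbT.
Qed.

Lemma large_gaps_isolated_geq R :
  large_gaps R -> forall k M, 0 < k -> exists2 q, M <= q & isolated R k q.
Proof.
move=> [R_unbounded [notR0 R_gaps]] k M k_gt0.
have [p [le_Mp Rp]] := R_unbounded M.
have [|q [Rq isoq]] := R_gaps (k * p.+1); first by rewrite muln_gt0 k_gt0.
have q_gt0 : 0 < q by case: q Rq {isoq} => // /notR0.
have iso_q : isolated R k q.
  by apply: isolated_leq (conj Rq isoq) => //; rewrite leq_pmulr.
exists q => //; rewrite leqNgt; apply/negP => lt_qM.
have : p = q by apply: isoq => //; [apply: leq_trans (leq_div _ _) _ | ]; nia.
lia.
Qed.

Section ProbeWitness.

Variables (R : nat -> Prop) (s u v : nat) (a0 : 'I_s -> bool).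
Variables (a : 'I_u -> 'I_s -> nat) (c : 'I_u -> nat) (j0 : 'I_s).
Variables (K d P q : nat).

Hypothesis a0_j0 : a0 j0.
Hypothesis a_neq_a0 : forall i, ~ ((forall j, a i j = nat_of_bool (a0 j)) /\ c i = 0).
Hypothesis coef_le_K : forall i j, a i j <= K.
Hypothesis d_gt0 : 0 < d.
Hypothesis c_lt_d : forall i, c i < d.
Hypothesis K_lt_P : K < P.
Hypothesis d_lt_P : d < P.
Hypothesis v_le_P : v <= P.
Hypothesis q_large : 2 * \sum_(j < s) P ^ j.+1 + 2 * d < q.
Hypothesis q_isolated : isolated R (3 * K + 2) q.

Local Notation b0 := (fun j => nat_of_bool (a0 j)).
Let base (j : 'I_s) := P ^ j.+1.
Let probe t j := base j + (if j == j0 then t else 0).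
Let Q := q - dotn b0 base.

Let P_gt0 : 0 < P. Proof. by apply: leq_ltn_trans d_lt_P. Qed.

Let dotn_b0_base_le : dotn b0 base <= \sum_(j < s) P ^ j.+1.
Proof. by apply: leq_sum => j _; case: (a0 j); rewrite ?mul1n ?mul0n. Qed.

Let dotn_a_base_le i : dotn (a i) base <= K * \sum_(j < s) P ^ j.+1.
Proof. by rewrite big_distrr; apply: leq_sum => j _; rewrite leq_mul2r coef_le_K orbT. Qed.

Lemma probe_geq t j : v <= probe t j.
Proof.
apply: leq_trans v_le_P _; apply: leq_trans (leq_addr _ _).
by rewrite /base expnS leq_pmulr // expn_gt0 P_gt0.
Qed.

Lemma dotn_b0_probe e : dotn b0 (probe (Q + e)) = q + e.
Proof. rewrite dotn_addr_delta a0_j0 mul1n /Q; lia. Qed.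

Lemma notR_gap : ~ R (q + d).
Proof.
case: q_isolated => _ isoq /isoq; have := leq_div q (3 * K + 2); lia.
Qed.

Lemma inR_shift_probe_eq i e :
  0 < a i j0 -> e <= d -> inR_shift R (dotn (a i) (probe (Q + e))) (c i) ->
  dotn (a i) (probe (Q + e)) = q + c i.
Proof.
rewrite dotn_addr_delta => coef_gt0 le_ed [le_c Rn].
have le_coefK := coef_le_K i j0; have le_ci := c_lt_d i.
have le_aB := dotn_a_base_le i; have le_B := dotn_b0_base_le.
have : dotn (a i) base + a i j0 * (Q + e) - c i = q.
  case: q_isolated => _ /(_ _ _ _ Rn) -> //.
    have le_Qe : Q + e <= a i j0 * (Q + e) by rewrite leq_pmull.
    by apply: leq_trans (leq_div2l q (isT : 0 < 2) _) _; rewrite /Q; lia.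
  have : a i j0 * (Q + e) <= K * (2 * q) by apply: leq_mul; rewrite /Q; lia.
  have : K * \sum_(j < s) P ^ j.+1 <= K * q by rewrite leq_mul2l; lia.
  nia.
lia.
Qed.

Lemma probe_coef_j0_eq1 i e :
  0 < a i j0 -> dotn (a i) (probe (Q + e)) = q + c i -> a i j0 = 1.
Proof.
rewrite dotn_addr_delta => coef_gt0 eq_n; apply/eqP; rewrite eqn_leq coef_gt0 andbT.
rewrite leqNgt; apply/negP => coef_gt1.
have : 2 * (Q + e) <= a i j0 * (Q + e) by rewrite leq_mul2r coef_gt1 orbT.
have := c_lt_d i; have := dotn_b0_base_le; rewrite /Q; lia.
Qed.

Lemma probe_digits_eq i e :
  e < P -> a i j0 = 1 -> dotn (a i) (probe (Q + e)) = q + c i ->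
  a i =1 b0 /\ e = c i.
Proof.
rewrite dotn_addr_delta => lt_eP coef_eq1; rewrite coef_eq1 mul1n => eq_n.
have lt_ciP : c i < P by apply: ltn_trans (c_lt_d i) d_lt_P.
have : dotn (a i) base + e = dotn b0 base + c i.
  by move: eq_n; have := dotn_b0_base_le; rewrite /Q; lia.
rewrite /base !dotn_pow_succ ![P * _]mulnC => /edivn_uniq[] // eq_digits ->.
split=> //; apply: base_digits_inj eq_digits => j.
  exact: leq_ltn_trans (coef_le_K i j) K_lt_P.
by have := coef_le_K i j0; case: (a0 j); lia.
Qed.

Lemma probe_notin_R_shift i e :
  0 < a i j0 -> e = 0 \/ e = d -> ~ inR_shift R (dotn (a i) (probe (Q + e))) (c i).
Proof.
move=> coef_gt0 e_0d in_n.
have le_ed : e <= d by case: e_0d => ->.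
have eq_n := inR_shift_probe_eq coef_gt0 le_ed in_n.
have lt_eP : e < P by apply: leq_ltn_trans le_ed d_lt_P.
have [eq_a eq_e] := probe_digits_eq lt_eP (probe_coef_j0_eq1 coef_gt0 eq_n) eq_n.
case: e_0d eq_e => -> eq_c; first exact: a_neq_a0 (conj eq_a (esym eq_c)).
by have := c_lt_d i; rewrite eq_c ltnn.
Qed.

Lemma probe_inR_shift_iff i :
  inR_shift R (dotn (a i) (probe Q)) (c i) <-> inR_shift R (dotn (a i) (probe (Q + d))) (c i).
Proof.
have [coef_eq0 | coef_gt0] := posnP (a i j0).
  by rewrite !dotn_addr_delta coef_eq0 !mul0n.
split=> in_n; exfalso.
  by apply: (probe_notin_R_shift coef_gt0 (or_introl erefl)); rewrite addn0.
exact: (probe_notin_R_shift coef_gt0 (or_intror erefl)).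
Qed.

Lemma probe_rich_witness :
  exists x y : 'I_s -> nat,
    (forall j, v <= x j) /\ (forall j, v <= y j) /\
    (R (dotn b0 x) <-> ~ R (dotn b0 y)) /\
    (forall i, inR_shift R (dotn (a i) x) (c i) <-> inR_shift R (dotn (a i) y) (c i)).
Proof.
exists (probe Q), (probe (Q + d)).
split; first by move=> j; apply: probe_geq.
split; first by move=> j; apply: probe_geq.
split; last exact: probe_inR_shift_iff.
have := dotn_b0_probe 0; rewrite !addn0 => ->; rewrite dotn_b0_probe.
by split=> [_ | _]; [exact: notR_gap | case: q_isolated].
Qed.

End ProbeWitness.

Theorem proposition6p10 (R : nat -> Prop) : large_gaps R -> rich R.
Proof.
move=> gapsR s u v a0 a c [j0 a0_j0] a_neq_a0.
pose K := \max_(i < u) \max_(j < s) a i j.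
pose d := (\max_(i < u) c i).+1.
pose P := K + d + v + 1.
have coef_le_K i j : a i j <= K.
  exact: leq_trans (leq_bigmax j) (leq_bigmax (F := fun i => \max_(j < s) a i j) i).
have c_lt_d i : c i < d by rewrite ltnS (leq_bigmax (F := c) i).
have [|q q_large q_isolated] :=
  large_gaps_isolated_geq gapsR (k := 3 * K + 2) (2 * \sum_(j < s) P ^ j.+1 + 2 * d).+1.
  by rewrite addn2.
by apply: (probe_rich_witness a0_j0 a_neq_a0 coef_le_K _ c_lt_d _ _ _ q_large q_isolated);
  rewrite /P; lia.
Qed.
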